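(* Let $k\ge2$, $n\ge1$, and let $T$ be a $k$-tensor in $n$ dimensions with all entries positive that is $2$-line stochastic. Then $T$ has a unique positive fixed point, i.e., there is exactly one entrywise positive probability vector $p\in\mathbb R^n$ with $T(p,\dots,p)=p$.
   Context: A $k$-tensor in $n$ dimensions is an array $T=(T_{i,j_1,\dots,j_{k-1}})$ with all indices in $[n]$; the first index is the output index. It acts on probability vectors by $T(p_1,\dots,p_{k-1})_i=\sum_{j_1,\dots,j_{k-1}=1}^n T_{i,j_1,\dots,j_{k-1}}\,p_1(j_1)\cdots p_{k-1}(j_{k-1})$. $T$ is $2$-line stochastic if it is stochastic over the output index, i.e., $\sum_{i=1}^nT_{i,j_1,\dots,j_{k-1}}=1$ for all fixed $j_1,\dots,j_{k-1}$, and there is an input position $m\in\{1,\dots,k-1\}$ over which it is also stochastic, i.e., $\sum_{j_m=1}^nT_{i,j_1,\dots,j_{k-1}}=1$ for every fixing of $i$ and of the other input indices. A fixed point of $T$ is a probability vector $p$ (nonnegative entries summing to $1$) with $p=T(p,\dots,p)$. *)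

From mathcomp Require Import all_boot all_order all_algebra.
From mathcomp Require Import reals.
Set Implicit Arguments. Unset Strict Implicit. Unset Printing Implicit Defensive.
Import Order.TTheory GRing.Theory Num.Theory.
Local Open Scope ring_scope.

(* A k-tensor in n dimensions: the output index i : 'I_n and a tuple of
   k-1 input indices, represented as a finite function 'I_(k.-1) -> 'I_n. *)
Definition tensor (R : Type) (k n : nat) :=
  'I_n -> {ffun 'I_k.-1 -> 'I_n} -> R.

Definition upd_idx (k n : nat) (j : {ffun 'I_k.-1 -> 'I_n}) (m : 'I_k.-1) (a : 'I_n)
  : {ffun 'I_k.-1 -> 'I_n} := [ffun l => if l == m then a else j l].

Definition tensor_apply (R : realType) (k n : nat) (T : tensor R k n)
  (p : 'I_n -> R) (i : 'I_n) : R :=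
  \sum_(j : {ffun 'I_k.-1 -> 'I_n}) T i j * \prod_(l < k.-1) p (j l).

Definition stochastic_output (R : realType) (k n : nat) (T : tensor R k n) : Prop :=
  forall j : {ffun 'I_k.-1 -> 'I_n}, \sum_(i < n) T i j = 1.

Definition stochastic_input (R : realType) (k n : nat) (T : tensor R k n)
  (m : 'I_k.-1) : Prop :=
  forall (i : 'I_n) (j : {ffun 'I_k.-1 -> 'I_n}),
    \sum_(a < n) T i (upd_idx j m a) = 1.

Definition two_line_stochastic (R : realType) (k n : nat) (T : tensor R k n) : Prop :=
  stochastic_output T /\ exists m : 'I_k.-1, stochastic_input T m.

Definition positive_prob_vector (R : realType) (n : nat) (p : 'I_n -> R) : Prop :=
  (forall i, 0 < p i) /\ \sum_(i < n) p i = 1.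

Definition is_fixed_point (R : realType) (k n : nat) (T : tensor R k n)
  (p : 'I_n -> R) : Prop :=
  forall i, tensor_apply T p i = p i.

From mathcomp Require Import all_boot all_order all_algebra.
From mathcomp Require Import reals.
From Stdlib Require Import FunctionalExtensionality.
Set Implicit Arguments. Unset Strict Implicit. Unset Printing Implicit Defensive.
Import Order.TTheory GRing.Theory Num.Theory.
Local Open Scope ring_scope.

(* The unique fixed point is the uniform vector; stochasticity over the output
   index is not needed.  Let T be stochastic over the input position m and q a
   positive probability vector.  Splitting off the m-th factor of the product,
   T(q,...,q)_i = sum_j (T_{i,j} prod_{l <> m} q(j_l)) q(j_m), and the weights
   T_{i,j} prod_{l <> m} q(j_l) are positive and sum to 1 (sum first over j_m).
   So each T(q,...,q)_i is a weighted mean of the values of q with positive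
   weights.  For the uniform q this mean is 1/n; for a fixed point q, taking i
   where q is maximal, a mean equal to the maximum forces q to be constant. *)

Lemma weighted_mean_eq_ub (R : numDomainType) (I : finType) (w x : I -> R)
    (c : R) :
  (forall i, 0 < w i) -> (forall i, x i <= c) ->
  \sum_i w i = 1 -> \sum_i w i * x i = c -> forall i, x i = c.
Proof.
move=> w_gt0 x_le_c w_sum1 mean_c.
have gap_sum0 : \sum_i w i * (c - x i) = 0.
  rewrite (eq_bigr (fun i => w i * c - w i * x i)) => [|i _]; last by rewrite mulrBr.
  by rewrite sumrB -mulr_suml w_sum1 mul1r mean_c subrr.
have gap_ge0 i : true -> 0 <= w i * (c - x i).
  by move=> _; rewrite mulr_ge0 ?subr_ge0 // ltW.
move=> i; apply/eqP; rewrite eq_sym -subr_eq0.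
by have /eqP := psumr_eq0P gap_ge0 gap_sum0 (i := i) isT; rewrite mulf_eq0 gt_eqF.
Qed.

Section IndexUpdate.
Variables (R : realType) (k n : nat).
Local Notation idx := {ffun 'I_k.-1 -> 'I_n}.
Implicit Types (j : idx) (m : 'I_k.-1) (q : 'I_n -> R).

Lemma upd_idx_id j m : upd_idx j m (j m) = j.
Proof. by apply/ffunP => l; rewrite ffunE; case: eqP => // ->. Qed.

Lemma upd_idx_upd j m a b : upd_idx (upd_idx j m a) m b = upd_idx j m b.
Proof. by apply/ffunP => l; rewrite !ffunE; case: eqP. Qed.

Lemma upd_idx_at j m a : upd_idx j m a m = a.
Proof. by rewrite ffunE eqxx. Qed.

(* Each multi-index is counted once: by its m-th entry a and by the
   representative of its class whose m-th entry is b. *)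
Lemma sum_upd_idx (F : idx -> R) m (b : 'I_n) :
  \sum_(j : idx) F j = \sum_(j : idx | j m == b) \sum_a F (upd_idx j m a).
Proof.
rewrite (exchange_big_dep xpredT) //= (partition_big (fun j => j m) xpredT) //=.
apply: eq_bigr => a _.
rewrite (reindex_onto (fun j => upd_idx j m a) (fun j => upd_idx j m b)) /=.
  apply: eq_bigl => j; rewrite upd_idx_at eqxx andbT upd_idx_upd.
  by apply/eqP/eqP => [<-|<-]; rewrite ?upd_idx_at ?upd_idx_id.
by move=> j /eqP <-; rewrite upd_idx_upd upd_idx_id.
Qed.

Definition prod_but q m j := \prod_(l < k.-1 | l != m) q (j l).

Lemma prod_but_upd q m j a : prod_but q m (upd_idx j m a) = prod_but q m j.
Proof. by apply: eq_bigr => l /negPf l_neq_m; rewrite ffunE l_neq_m. Qed.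

Lemma prod_idxD1 q m j : \prod_(l < k.-1) q (j l) = q (j m) * prod_but q m j.
Proof. exact: bigD1. Qed.

Lemma sum_prod_idx q : \sum_(j : idx) \prod_(l < k.-1) q (j l) = (\sum_a q a) ^+ k.-1.
Proof.
rewrite -(bigA_distr_bigA (fun (_ : 'I_k.-1) a => q a)) /=.
by rewrite prodr_const card_ord.
Qed.

Lemma sum_stochastic_input_prod_but (T : tensor R k n) m q i :
  stochastic_input T m -> \sum_a q a = 1 ->
  \sum_(j : idx) T i j * prod_but q m j = 1.
Proof.
move=> T_sto q_sum1.
have [b _|no_index] := pickP (@predT 'I_n); last first.
  by move: q_sum1; rewrite big_pred0 // => /eqP; rewrite eq_sym oner_eq0.
have := sum_prod_idx q; rewrite q_sum1 expr1n (sum_upd_idx _ m b) => <-.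
rewrite (sum_upd_idx _ m b); apply: eq_bigr => j _.
under eq_bigr do rewrite prod_but_upd.
under [RHS]eq_bigr do rewrite (prod_idxD1 _ m) prod_but_upd upd_idx_at.
by rewrite -!mulr_suml T_sto q_sum1.
Qed.

Lemma tensor_apply_prod_but (T : tensor R k n) m q i :
  tensor_apply T q i = \sum_(j : idx) T i j * prod_but q m j * q (j m).
Proof.
by apply: eq_bigr => j _; rewrite (prod_idxD1 _ m) mulrCA mulrC.
Qed.

End IndexUpdate.

Section FixedPoint.
Variables (R : realType) (k n : nat) (T : tensor R k n) (m : 'I_k.-1).
Hypotheses (T_gt0 : forall i j, 0 < T i j) (T_sto : stochastic_input T m).

Definition uniform_vector : 'I_n -> R := fun=> n%:R^-1.

Lemma uniform_positive_prob : (0 < n)%N -> positive_prob_vector uniform_vector.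
Proof.
move=> n_gt0; split=> [i|]; first by rewrite invr_gt0 ltr0n.
by rewrite sumr_const card_ord -[_ *+ n]mulr_natr mulVf // pnatr_eq0 -lt0n.
Qed.

Lemma uniform_fixed_point : (0 < n)%N -> is_fixed_point T uniform_vector.
Proof.
move=> n_gt0 i; rewrite (tensor_apply_prod_but _ m) -mulr_suml.
rewrite sum_stochastic_input_prod_but ?mul1r //.
by case: (uniform_positive_prob n_gt0).
Qed.

Lemma fixed_point_const q a b :
  positive_prob_vector q -> is_fixed_point T q -> q a = q b.
Proof.
move=> [q_gt0 q_sum1] q_fix.
pose imax := [arg max_(i > a) q i]%O.
have q_le_max i : q i <= q imax.
  by rewrite /imax; case: (@arg_maxP _ _ _ a xpredT q isT) => i' _; apply.
have q_eq_max : forall j : {ffun 'I_k.-1 -> 'I_n}, q (j m) = q imax.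
  apply: (@weighted_mean_eq_ub _ _ (fun j => T imax j * prod_but q m j)
           (fun j => q (j m)) _ _ (fun j => q_le_max (j m))
           (sum_stochastic_input_prod_but imax T_sto q_sum1)).
    by move=> j; rewrite mulr_gt0 // prodr_gt0.
  by rewrite -(tensor_apply_prod_but _ m) q_fix.
by rewrite -[a](ffunE (fun=> a) m) -[b](ffunE (fun=> b) m) !q_eq_max.
Qed.

Lemma fixed_point_uniform q :
  positive_prob_vector q -> is_fixed_point T q -> q = uniform_vector.
Proof.
move=> q_prob q_fix; apply: functional_extensionality => a.
have n_neq0 : n%:R != 0 :> R by rewrite pnatr_eq0 -lt0n (leq_ltn_trans _ (ltn_ord a)).
have q_sum : \sum_(b < n) q b = n%:R * q a.
  by rewrite (eq_bigr _ (fun b _ => fixed_point_const b a q_prob q_fix))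
    sumr_const card_ord mulr_natl.
apply: (mulfI n_neq0); rewrite mulfV // -q_sum.
by case: q_prob.
Qed.

End FixedPoint.

Theorem theorem1p6 (R : realType) (k n : nat) (T : tensor R k n) :
  (2 <= k)%N -> (1 <= n)%N ->
  (forall i j, 0 < T i j) ->
  two_line_stochastic T ->
  exists p : 'I_n -> R,
    (positive_prob_vector p /\ is_fixed_point T p) /\
    forall q : 'I_n -> R, positive_prob_vector q -> is_fixed_point T q -> q = p.
Proof.
move=> _ n_gt0 T_gt0 [_ [m T_sto]].
exists (@uniform_vector R n); split.
  by split; [exact: uniform_positive_prob | exact: uniform_fixed_point T_sto n_gt0].
by move=> q; exact: fixed_point_uniform T_gt0 T_sto q.
Qed.
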